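(* Let $\mathcal{H}$ be a Hilbert space of finite dimension $d$, let $\mathcal{Z}$ be a finite set with probability distribution $\{p_z\}_{z\in\mathcal{Z}}$, let $A^{(i)}_z$ ($i=1,\dots,R$, $z\in\mathcal{Z}$) be Hermitian operators on $\mathcal{H}$ and $b_1,\dots,b_R\in\mathbb{R}$. Suppose there exists at least one collection of density matrices $\{\rho_z\}_{z\in\mathcal{Z}}$ on $\mathcal{H}$ satisfying $\sum_z p_z\operatorname{Tr}[A^{(i)}_z\rho_z]=b_i$ for all $i=1,\dots,R$ (e.g. the true ensemble from which these values were observed). Then there exists a collection of density matrices $\{\sigma_z\}_{z\in\mathcal{Z}}$ on $\mathcal{H}$ satisfying $\sum_z p_z\operatorname{Tr}[A^{(i)}_z\sigma_z]=b_i$ for all $i=1,\dots,R$ such that at most $R$ of the states $\sigma_z$ are not pure.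
   Context: A density matrix is a Hermitian, positive semi-definite, unit-trace operator; it is pure if it equals $|\phi\rangle\langle\phi|$ for some unit vector $|\phi\rangle$. *)

From HB Require Import structures.
From mathcomp Require Import all_boot all_order all_algebra.
From mathcomp Require Import complex.
From mathcomp Require Import reals.
Set Implicit Arguments. Unset Strict Implicit. Unset Printing Implicit Defensive.
Import Order.TTheory GRing.Theory Num.Theory.
Local Open Scope ring_scope.

Definition adjmx (R : rcfType) (m n : nat) (A : 'M[R[i]]_(m, n)) : 'M[R[i]]_(n, m) :=
  \matrix_(i < n, j < m) (A j i)^*.

Definition hermitian_op (R : rcfType) (d : nat) (A : 'M[R[i]]_d) : Prop :=
  adjmx A = A.

(* positive semi-definite: <v, A v> is real and nonnegative for all v *)
Definition psd_op (R : rcfType) (d : nat) (A : 'M[R[i]]_d) : Prop :=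
  forall v : 'cV[R[i]]_d, 0 <= (adjmx v *m A *m v) 0 0.

Definition density_op (R : rcfType) (d : nat) (rho : 'M[R[i]]_d) : Prop :=
  [/\ hermitian_op rho, psd_op rho & \tr rho = 1].

Definition pure_state (R : rcfType) (d : nat) (rho : 'M[R[i]]_d) : Prop :=
  exists phi : 'cV[R[i]]_d, (adjmx phi *m phi) 0 0 = 1 /\ rho = phi *m adjmx phi.

Definition cR (R : rcfType) (x : R) : R[i] := Complex x 0.

From HB Require Import structures.
From mathcomp Require Import all_boot all_order all_algebra.
From mathcomp Require Import complex.
From mathcomp Require Import reals.
From mathcomp Require Import ring.
Set Implicit Arguments. Unset Strict Implicit. Unset Printing Implicit Defensive.
Import Order.TTheory GRing.Theory Num.Theory.
Local Open Scope ring_scope.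
Local Open Scope sesquilinear_scope.

(* Each [rho z] is a convex combination of the rank-one projectors onto its
   eigenvectors [phi z j], with weights [lam z j].  Keeping the [phi z j] fixed,
   the weights of an admissible ensemble are exactly the nonnegative solutions
   [y] of |Z| + R linear equations: [sum_j y (z, j) = 1] for every [z] (unit
   trace) and the R measurement constraints.  By Caratheodory's theorem [lam]
   can be replaced by such a solution with at most |Z| + R nonzero weights.
   Every [z] keeps at least one nonzero weight, so at most R of the states
   [sigma z] have two or more, and the others are pure. *)

Lemma big_pairE (R : Type) (idx : R) (op : Monoid.com_law idx) (Z I : finType)
    (F : Z * I -> R) :
  \big[op/idx]_u F u = \big[op/idx]_z \big[op/idx]_j F (z, j).
Proof. by rewrite pair_bigA; apply: eq_bigr => -[]. Qed.

Definition supp (F : nmodType) (I : finType) (x : I -> F) : {set I} :=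
  [set i | x i != 0].

Lemma in_supp (F : nmodType) (I : finType) (x : I -> F) i :
  (i \in supp x) = (x i != 0).
Proof. by rewrite inE. Qed.

Lemma supp_neq0 (F : nmodType) (I : finType) (x : I -> F) :
  \sum_i x i != 0 -> supp x != set0.
Proof.
apply: contraNneq => supp0; apply/eqP; rewrite big1 // => i _.
by apply/eqP; rewrite -[_ == 0]negbK -in_supp supp0 inE.
Qed.

Lemma kernel_supported_neq0 (F : fieldType) (I J : finType) (M : J -> I -> F)
    (S : {set I}) : (#|J| < #|S|)%N ->
  exists c : I -> F,
    [/\ supp c \subset S, supp c != set0 & forall j, \sum_i M j i * c i = 0].
Proof.
move=> ltJS.
pose A : 'M[F]_(#|S|, #|J|) := \matrix_(a, b) M (enum_val b) (enum_val a).
have : kermx A != 0.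
  by rewrite -mxrank_eq0 mxrank_ker subn_eq0 -ltnNge (leq_ltn_trans (rank_leq_col A)).
case/rowV0Pn => u /sub_kermxP uA0 u_neq0.
have [i0 i0S] : exists i0, i0 \in S by apply/card_gt0P; apply: leq_ltn_trans ltJS.
pose c i := if i \in S then u 0 (enum_rank_in i0S i) else 0.
have cE a : c (enum_val a) = u 0 a by rewrite /c enum_valP enum_valK_in.
exists c; split.
- by apply/subsetP => i; rewrite in_supp /c; case: (i \in S); rewrite ?eqxx.
- apply: contraNneq u_neq0 => c0; apply/eqP/rowP => a.
  by have := in_supp c (enum_val a); rewrite c0 inE cE mxE => /esym/negbFE/eqP.
- move=> j; rewrite (bigID (mem S)) /= [X in _ + X]big1 => [|i /negbTE iNS]; last first.
    by rewrite /c iNS mulr0.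
  rewrite addr0 (big_enum_val (fun i => M j i * c i)) /=.
  transitivity ((u *m A) 0 (enum_rank j)); last by rewrite uA0 mxE.
  by rewrite mxE; apply: eq_bigr => a _; rewrite cE mxE enum_rankK mulrC.
Qed.

Section Caratheodory.

Variables (F : realFieldType) (I J : finType) (M : J -> I -> F).

Lemma kernel_supported_gt0 (S : {set I}) : (#|J| < #|S|)%N ->
  exists c : I -> F,
    [/\ supp c \subset S, exists k, 0 < c k & forall j, \sum_i M j i * c i = 0].
Proof.
case/(kernel_supported_neq0 M) => c [cS /set0Pn[k]]; rewrite in_supp => ck_neq0 Mc0.
have [ck_lt0 | ck_gt0 | ck0] := ltgtP (c k) 0; last by rewrite ck0 eqxx in ck_neq0.
  exists (fun i => - c i); split.
  - by apply: subset_trans cS; apply/subsetP => i; rewrite !in_supp oppr_eq0.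
  - by exists k; rewrite oppr_gt0.
  - move=> j; under eq_bigr do rewrite mulrN.
    by rewrite sumrN Mc0 oppr0.
by exists c; split=> //; exists k.
Qed.

Lemma nonneg_support_reduction (x : I -> F) :
  (forall i, 0 <= x i) -> (#|J| < #|supp x|)%N ->
  exists y : I -> F, [/\ forall i, 0 <= y i,
    forall j, \sum_i M j i * y i = \sum_i M j i * x i & supp y \proper supp x].
Proof.
move=> x_ge0 /kernel_supported_gt0[c [cx [k ck_gt0] Mc0]].
have c0 i : i \notin supp x -> c i = 0.
  by move=> /(contra (subsetP cx i)); rewrite in_supp negbK => /eqP.
have [m cm_gt0 m_min] := @arg_minP _ _ _ k (fun i => 0 < c i) (fun i => x i / c i) ck_gt0.
pose t := x m / c m; pose y i := x i - t * c i.
exists y; split.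
- move=> i; rewrite /y subr_ge0; have [ci_gt0 | ci_le0] := ltP 0 (c i).
    by rewrite -ler_pdivlMr // m_min.
  by apply: le_trans (x_ge0 i); rewrite mulr_ge0_le0 // divr_ge0 // ltW.
- move=> j; rewrite /y; under eq_bigr do rewrite mulrBr mulrCA.
  by rewrite sumrB -mulr_sumr Mc0 mulr0 subr0.
- have ym0 : y m = 0 by rewrite /y /t divfK ?subrr // gt_eqF.
  apply/properP; split.
    apply/subsetP => i; rewrite !in_supp /y; apply: contraNN => /eqP xi0.
    by rewrite c0 ?in_supp ?xi0 ?eqxx // mulr0 subr0.
  exists m; last by rewrite in_supp ym0 eqxx.
  by apply: (subsetP cx); rewrite in_supp gt_eqF.
Qed.

Theorem caratheodory_nonneg (x : I -> F) : (forall i, 0 <= x i) ->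
  exists y : I -> F, [/\ forall i, 0 <= y i,
    forall j, \sum_i M j i * y i = \sum_i M j i * x i & (#|supp y| <= #|J|)%N].
Proof.
move: {2}#|supp x| (leqnn #|supp x|) => n; elim: n x => [|n IHn] x supp_x x_ge0.
  by exists x; split=> //; apply: leq_trans supp_x _.
have [small | /(nonneg_support_reduction x_ge0)[y [y_ge0 My yx]]] := leqP #|supp x| #|J|.
  by exists x.
have [|z [z_ge0 Mz z_small]] := IHn y _ y_ge0.
  by rewrite -ltnS (leq_trans (proper_card yx)).
by exists z; split=> // j; rewrite Mz My.
Qed.

End Caratheodory.

Lemma card_fibres_gt1 (Z I : finType) (P : {set Z * I}) n :
  (forall z, exists j, (z, j) \in P) -> (#|P| <= #|Z| + n)%N ->
  (#|[set z | 1 < #|[set j | (z, j) \in P]|]| <= n)%N.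
Proof.
set fibre := fun z => [set j | (z, j) \in P]; set S := [set z | _].
move=> fibre_neq0 cardP; rewrite -(leq_add2l #|Z|) (leq_trans _ cardP) //.
have -> : #|P| = \sum_z #|fibre z|.
  rewrite -sum1_card big_mkcond big_pairE; apply: eq_bigr => z _.
  by rewrite -sum1_card [RHS]big_mkcond; apply: eq_bigr => j _; rewrite inE.
rewrite -[#|Z|]sum1_card -sum1_card [X in (_ + X)%N]big_mkcond -big_split /=.
apply: leq_sum => z _; rewrite inE; case: ifP => // _.
by have [j Pzj] := fibre_neq0 z; apply/card_gt0P; exists j; rewrite inE.
Qed.

Lemma sum_indicator_fst (V : pzSemiRingType) (Z I : finType) (F : Z * I -> V) z :
  \sum_u (u.1 == z)%:R * F u = \sum_j F (z, j).
Proof.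
rewrite big_pairE (bigD1 z) //= [X in _ + X]big1 ?addr0 => [|z' /negbTE neq_z'].
  by apply: eq_bigr => j _; rewrite eqxx mul1r.
by apply: big1 => j _; rewrite neq_z' mul0r.
Qed.

Lemma caratheodory_fibres (F : realFieldType) (Z I K : finType)
    (a : K -> Z * I -> F) (x : Z * I -> F) :
  (forall u, 0 <= x u) -> (forall z, \sum_j x (z, j) != 0) ->
  exists y : Z * I -> F, [/\ forall u, 0 <= y u,
    forall z, \sum_j y (z, j) = \sum_j x (z, j),
    forall k, \sum_u a k u * y u = \sum_u a k u * x u &
    (#|[set z | 1 < #|supp (fun j => y (z, j))|]| <= #|K|)%N].
Proof.
move=> x_ge0 x_fibre_neq0.
pose M (r : Z + K) (u : Z * I) := match r with inl z => (u.1 == z)%:R | inr k => a k u end.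
have [y [y_ge0 My supp_y]] := caratheodory_nonneg M x_ge0.
have y_fibre z : \sum_j y (z, j) = \sum_j x (z, j).
  by rewrite -!sum_indicator_fst; apply: (My (inl z)).
exists y; split=> // [k|]; first exact: (My (inr k)).
have fibreE z : supp (fun j => y (z, j)) = [set j | (z, j) \in supp y].
  by apply/setP => j; rewrite !inE.
have -> : [set z | 1 < #|supp (fun j => y (z, j))|]%N =
          [set z | 1 < #|[set j | (z, j) \in supp y]|]%N.
  by apply/setP => z; rewrite !inE fibreE.
apply: card_fibres_gt1; last by rewrite (leq_trans supp_y) // card_sum.
move=> z; have /set0Pn[j] : supp (fun j => y (z, j)) != set0 by rewrite supp_neq0 ?y_fibre.
by rewrite fibreE inE; exists j.
Qed.

Lemma mulmx_row_col (C : pzSemiRingType) m n p (X : 'M[C]_(m, n)) (Y : 'M_(n, p))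
    i j :
  (row i X *m col j Y) 0 0 = (X *m Y) i j.
Proof. by rewrite !mxE; apply: eq_bigr => k _; rewrite !mxE. Qed.

Lemma mulmx_diag_sum (C : comPzRingType) m n p (X : 'M[C]_(m, n)) (s : 'rV_n)
    (Y : 'M_(n, p)) :
  X *m diag_mx s *m Y = \sum_j s 0 j *: (col j X *m row j Y).
Proof.
apply/matrixP => a b; rewrite mxE summxE; apply: eq_bigr => j _.
rewrite mul_mx_diag !mxE big_ord1 !mxE; ring.
Qed.

Section Mixtures.

Variables (R : rcfType) (d : nat).
Implicit Types (B rho : 'M[R[i]]_d) (phi v : 'cV[R[i]]_d).

Lemma cRE (x : R) : cR x = (x%:C)%C.
Proof. by []. Qed.

Lemma conj_cR (x : R) : (cR x)^* = cR x.
Proof. exact: conjc_real. Qed.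

Lemma real_cRE (z : R[i]) : z \is Num.real -> z = cR (complex.Re z).
Proof. by case/complex_realP => x ->. Qed.

Definition unit_vector phi : Prop := (adjmx phi *m phi) 0 0 = 1.

Definition expectation B phi : R := complex.Re ((adjmx phi *m B *m phi) 0 0).

Definition mixture (I : finType) (w : I -> R) (phi : I -> 'cV[R[i]]_d) : 'M[R[i]]_d :=
  \sum_j cR (w j) *: (phi j *m adjmx (phi j)).

Lemma adjmxE m n (X : 'M[R[i]]_(m, n)) : adjmx X = X^t*.
Proof. by apply/matrixP => a b; rewrite !mxE. Qed.

Lemma adjmx_row m n (X : 'M[R[i]]_(m, n)) j : adjmx (row j X) = col j (adjmx X).
Proof. by apply/matrixP => a b; rewrite !mxE. Qed.

Lemma adjmx_mul m n p (X : 'M[R[i]]_(m, n)) (Y : 'M[R[i]]_(n, p)) :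
  adjmx (X *m Y) = adjmx Y *m adjmx X.
Proof.
apply/matrixP => a b; rewrite !mxE rmorph_sum; apply: eq_bigr => k _.
by rewrite !mxE rmorphM mulrC.
Qed.

Lemma adjmxK m n (X : 'M[R[i]]_(m, n)) : adjmx (adjmx X) = X.
Proof. by apply/matrixP => a b; rewrite !mxE conjCK. Qed.

Lemma mxtrace_mul_rank1 B phi :
  \tr (B *m (phi *m adjmx phi)) = (adjmx phi *m B *m phi) 0 0.
Proof. by rewrite mulmxA mxtrace_mulC mulmxA /mxtrace big_ord1. Qed.

Lemma hermitian_expectationE B phi : hermitian_op B ->
  (adjmx phi *m B *m phi) 0 0 = cR (expectation B phi).
Proof.
move=> hermB; rewrite /expectation; set z := _ 0 0.
have zC : z^* = z.
  have -> : z^* = adjmx (adjmx phi *m B *m phi) 0 0 by rewrite mxE.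
  by rewrite !adjmx_mul adjmxK hermB mulmxA.
by apply: real_cRE; rewrite CrealE zC.
Qed.

Lemma mxtrace_mul_mixture (I : finType) B (w : I -> R) (phi : I -> 'cV[R[i]]_d) :
  hermitian_op B ->
  \tr (B *m mixture w phi) = cR (\sum_j w j * expectation B (phi j)).
Proof.
move=> hermB; rewrite mulmx_sumr raddf_sum /= cRE rmorph_sum; apply: eq_bigr => j _.
by rewrite -scalemxAr mxtraceZ mxtrace_mul_rank1 hermitian_expectationE // rmorphM.
Qed.

Lemma mxtrace_mixture (I : finType) (w : I -> R) (phi : I -> 'cV[R[i]]_d) :
  (forall j, unit_vector (phi j)) -> \tr (mixture w phi) = cR (\sum_j w j).
Proof.
move=> unit_phi; rewrite raddf_sum /= cRE rmorph_sum; apply: eq_bigr => j _.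
by rewrite mxtraceZ mxtrace_mulC /mxtrace big_ord1 unit_phi mulr1.
Qed.

Lemma hermitian_mixture (I : finType) (w : I -> R) (phi : I -> 'cV[R[i]]_d) :
  hermitian_op (mixture w phi).
Proof.
apply/matrixP => a b; rewrite !mxE !summxE rmorph_sum; apply: eq_bigr => j _.
by rewrite !mxE !big_ord1 !mxE !rmorphM /= conj_cR conjCK [_ * (_ ^*)]mulrC.
Qed.

Lemma psd_mixture (I : finType) (w : I -> R) (phi : I -> 'cV[R[i]]_d) :
  (forall j, 0 <= w j) -> psd_op (mixture w phi).
Proof.
move=> w_ge0 v; rewrite mulmx_sumr mulmx_suml summxE; apply: sumr_ge0 => j _.
rewrite -scalemxAr -scalemxAl mxE; apply: mulr_ge0; first by rewrite ler0c.
have -> : adjmx v *m (phi j *m adjmx (phi j)) *m v =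
    adjmx v *m phi j *m adjmx (adjmx v *m phi j) by rewrite adjmx_mul adjmxK !mulmxA.
rewrite mxE big_ord1 [adjmx _ 0 0]mxE.
exact: mul_conjC_ge0.
Qed.

Lemma density_mixture (I : finType) (w : I -> R) (phi : I -> 'cV[R[i]]_d) :
  (forall j, 0 <= w j) -> \sum_j w j = 1 -> (forall j, unit_vector (phi j)) ->
  density_op (mixture w phi).
Proof.
move=> w_ge0 w_sum1 unit_phi; split; first exact: hermitian_mixture.
  exact: psd_mixture.
by rewrite mxtrace_mixture // w_sum1.
Qed.

Lemma density_spectral_mixture rho : density_op rho ->
  exists (w : 'I_d -> R) (phi : 'I_d -> 'cV[R[i]]_d),
    [/\ forall j, 0 <= w j, \sum_j w j = 1, forall j, unit_vector (phi j)
      & rho = mixture w phi].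
Proof.
case=> herm_rho psd_rho tr_rho.
set P := spectralmx rho; set s := spectral_diag rho.
have PP : P *m adjmx P = 1%:M.
  by rewrite adjmxE; apply/unitarymxP/spectral_unitarymx.
have rhoE : rho = adjmx P *m diag_mx s *m P.
  have /orthomx_spectralP : rho \is normalmx.
    by apply/normalmxP; rewrite -adjmxE herm_rho.
  by rewrite invmx_unitary ?spectral_unitarymx // adjmxE.
(* The eigenvectors are the conjugated rows of the unitary [P]. *)
pose phi j := adjmx (row j P).
have unit_phi j : unit_vector (phi j).
  by rewrite /unit_vector /phi adjmxK adjmx_row mulmx_row_col PP mxE eqxx.
have sE j : s 0 j = (adjmx (phi j) *m rho *m phi j) 0 0.
  transitivity ((P *m adjmx P *m diag_mx s *m (P *m adjmx P)) j j).
    by rewrite PP mulmx1 mul1mx mxE eqxx mulr1n.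
  by rewrite mulmxA -mulmx_row_col !row_mul /phi adjmxK adjmx_row rhoE !mulmxA.
have s_ge0 j : 0 <= s 0 j by rewrite sE; apply: psd_rho.
have rho_mixture : rho = mixture (fun j => complex.Re (s 0 j)) phi.
  rewrite {1}rhoE mulmx_diag_sum; apply: eq_bigr => j _.
  by rewrite -real_cRE ?ger0_real // /phi adjmxK adjmx_row.
exists (fun j => complex.Re (s 0 j)), phi; split=> // [j|].
  by have := s_ge0 j; rewrite lecE => /andP[].
by move: tr_rho; rewrite rho_mixture mxtrace_mixture // => /(congr1 (@complex.Re R)).
Qed.

Lemma pure_mixture (I : finType) (w : I -> R) (phi : I -> 'cV[R[i]]_d) :
  \sum_j w j = 1 -> (#|supp w| <= 1)%N ->
  (forall j, unit_vector (phi j)) -> pure_state (mixture w phi).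
Proof.
move=> w_sum1 /card_le1_eqP supp_w unit_phi.
have /set0Pn[j0 j0_supp] : supp w != set0 by rewrite supp_neq0 // w_sum1 oner_neq0.
have w0 j : j != j0 -> w j = 0.
  move=> neq_j0; apply/eqP; rewrite -[_ == 0]negbK -in_supp.
  by apply: contra neq_j0 => j_supp; apply/eqP; apply: supp_w.
have w1 : w j0 = 1 by rewrite -w_sum1 (bigD1 j0) //= big1 ?addr0.
exists (phi j0); split; first exact: unit_phi.
by rewrite /mixture (bigD1 j0) //= w1 scale1r big1 ?addr0 // => j /w0 ->; rewrite scale0r.
Qed.

Lemma sum_mxtrace_mul_mixture (Z I : finType) (p : Z -> R) (B : Z -> 'M[R[i]]_d)
    (w : Z * I -> R) (phi : Z -> I -> 'cV[R[i]]_d) :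
  (forall z, hermitian_op (B z)) ->
  \sum_z cR (p z) * \tr (B z *m mixture (fun j => w (z, j)) (phi z)) =
  cR (\sum_u p u.1 * expectation (B u.1) (phi u.1 u.2) * w u).
Proof.
move=> herm_B; rewrite big_pairE cRE rmorph_sum; apply: eq_bigr => z _.
rewrite mxtrace_mul_mixture // !cRE -rmorphM mulr_sumr; apply: congr1.
by apply: eq_bigr => j _ /=; ring.
Qed.

End Mixtures.

Theorem mainTheorem2 (R : realType) (d : nat) (Z : finType) (p : Z -> R)
  (nRR : nat) (A : 'I_nRR -> Z -> 'M[R[i]]_d) (b : 'I_nRR -> R) :
  (forall z, 0 <= p z) -> \sum_(z : Z) p z = 1 ->
  (forall k z, hermitian_op (A k z)) ->
  (exists rho : Z -> 'M[R[i]]_d,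
      (forall z, density_op (rho z)) /\
      forall k, \sum_(z : Z) cR (p z) * \tr (A k z *m rho z) = cR (b k)) ->
  exists sigma : Z -> 'M[R[i]]_d,
    (forall z, density_op (sigma z)) /\
    (forall k, \sum_(z : Z) cR (p z) * \tr (A k z *m sigma z) = cR (b k)) /\
    exists S : {set Z}, (#|S| <= nRR)%N /\ forall z, z \notin S -> pure_state (sigma z).
Proof.
(* The argument does not use that [p] is a probability distribution. *)
move=> _ _ herm_A [rho [rho_density rho_b]].
have [lam] := fin_all_exists (fun z => density_spectral_mixture (rho_density z)).
case/fin_all_exists => phi decomp.
have lam_ge0 z : forall j, 0 <= lam z j by case: (decomp z).
have lam_sum1 z : \sum_j lam z j = 1 by case: (decomp z).
have unit_phi z : forall j, unit_vector (phi z j) by case: (decomp z).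
have rhoE z : rho z = mixture (lam z) (phi z) by case: (decomp z).
pose a k (u : Z * 'I_d) := p u.1 * expectation (A k u.1) (phi u.1 u.2).
have [|y [y_ge0 y_fibre ay mixed]] :=
  caratheodory_fibres a (x := fun u => lam u.1 u.2) (fun u => lam_ge0 u.1 u.2).
  by move=> z; rewrite lam_sum1 oner_neq0.
have y_sum1 z : \sum_j y (z, j) = 1 by rewrite y_fibre lam_sum1.
exists (fun z => mixture (fun j => y (z, j)) (phi z)); split; [|split].
- by move=> z; apply: density_mixture.
- move=> k; rewrite -rho_b; under [RHS]eq_bigr do rewrite rhoE.
  rewrite sum_mxtrace_mul_mixture // (sum_mxtrace_mul_mixture p (fun u => lam u.1 u.2)) //.
  by rewrite ay.
- exists [set z | 1 < #|supp (fun j => y (z, j))|]%N; rewrite card_ord in mixed.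
  split=> // z; rewrite inE -leqNgt => supp_yz.
  exact: pure_mixture.
Qed.
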